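(* Let $X$ be a class of posets. Then: (i) The following are equivalent: (i.a) $X\text{-}\mathrm{Down}(P)\subseteq\mathrm{Id}(P)$ for all posets $P$; (i.b) every member of $X$ is upward directed. (ii) Consider the conditions: (ii.a) for all $Q,Q'\in X$ there exists $R\in X$ admitting an isotone map to the product poset $Q\times Q'$ whose image is cofinal in $Q\times Q'$; (ii.b) for every lower semilattice $S$, $X\text{-}\mathrm{Down}(S)$ is a lower subsemilattice of $\mathrm{Down}(S)$ (i.e., closed under pairwise intersection); (ii.c) for every upper semilattice $S$, $X\text{-}\mathrm{Down}(S)$ is an upper subsemilattice of $\mathrm{Id}(S)$; (ii.d) for every lattice $L$, $X\text{-}\mathrm{Down}(L)$ is a sublattice of $\mathrm{Id}(L)$. Then (ii.a) implies (ii.b); and if the equivalent conditions of (i) hold, then (ii.a) implies both (ii.c) and (ii.d).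
   Context: For a poset $P$ and $Y\subseteq P$, $P\downarrow Y=\{y\in P\mid\exists x\in Y,\ y\le x\}$. A downset of $P$ is a subset $d$ with $x\le y\in d\Rightarrow x\in d$; $\mathrm{Down}(P)$ is the set of all downsets of $P$ ordered by inclusion (for $S$ a lower semilattice its meet is intersection). An ideal of $P$ is a (possibly empty) upward directed downset; $\mathrm{Id}(P)$ is the set of all ideals ordered by inclusion (for $S$ an upper semilattice, $\mathrm{Id}(S)$ is a lattice whose join is the ideal generated by the union; for $L$ a lattice its meet is intersection). For a class $X$ of posets, $X\text{-}\mathrm{Down}(P)\subseteq\mathrm{Down}(P)$ is the set of all downsets of the form $P\downarrow f(Q)$ with $Q\in X$ and $f:Q\to P$ an isotone map. A subset $Y$ of a poset $Z$ is cofinal if every element of $Z$ is majorized by some element of $Y$. *)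

Record poset := Poset {
  car :> Type;
  le : car -> car -> Prop;
  le_refl : forall x, le x x;
  le_antisym : forall x y, le x y -> le y x -> x = y;
  le_trans : forall x y z, le x y -> le y z -> le x z
}.
Arguments le {p} _ _.

Definition subset {T : Type} (A B : T -> Prop) := forall x, A x -> B x.

Definition isotone {P Q : poset} (f : P -> Q) :=
  forall x y : P, le x y -> le (f x) (f y).

Definition down_of {P : poset} (Y : P -> Prop) : P -> Prop :=
  fun y => exists x, Y x /\ le y x.

Definition image {A : Type} {B : Type} (f : A -> B) : B -> Prop :=
  fun y => exists x, f x = y.

Definition is_downset {P : poset} (d : P -> Prop) :=
  forall x y : P, le x y -> d y -> d x.

Definition up_directed_set {P : poset} (d : P -> Prop) :=
  forall x y, d x -> d y -> exists z, d z /\ le x z /\ le y z.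

Definition up_directed (Q : poset) :=
  forall x y : Q, exists z, le x z /\ le y z.

(* ideals: possibly empty, upward directed downsets *)
Definition is_ideal {P : poset} (d : P -> Prop) :=
  is_downset d /\ up_directed_set d.

(* X-Down(P): d = P ↓ f(Q) for some Q in X and isotone f : Q -> P
   (equality of subsets taken extensionally) *)
Definition XDown (X : poset -> Prop) (P : poset) (d : P -> Prop) :=
  exists (Q : poset) (f : Q -> P), X Q /\ isotone f /\
    forall y, d y <-> down_of (image f) y.

Definition prod_le (Q Q' : poset) (a b : Q * Q') :=
  le (fst a) (fst b) /\ le (snd a) (snd b).

Lemma prod_le_refl Q Q' : forall x, prod_le Q Q' x x.
Proof. intros [a b]; split; apply le_refl. Qed.

Lemma prod_le_antisym Q Q' : forall x y,
  prod_le Q Q' x y -> prod_le Q Q' y x -> x = y.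
Proof.
  intros [a b] [c d] [H1 H2] [H3 H4]; simpl in *.
  rewrite (le_antisym _ _ _ H1 H3), (le_antisym _ _ _ H2 H4); reflexivity.
Qed.

Lemma prod_le_trans Q Q' : forall x y z,
  prod_le Q Q' x y -> prod_le Q Q' y z -> prod_le Q Q' x z.
Proof.
  intros [a b] [c d] [e g] [H1 H2] [H3 H4]; split; simpl in *;
  eapply le_trans; eauto.
Qed.

Definition prod_poset (Q Q' : poset) : poset :=
  Poset (Q * Q') (prod_le Q Q') (prod_le_refl Q Q')
        (prod_le_antisym Q Q') (prod_le_trans Q Q').

Definition cofinal {Z : poset} (Y : Z -> Prop) :=
  forall z : Z, exists y, Y y /\ le z y.

Definition is_glb {P : poset} (x y m : P) :=
  le m x /\ le m y /\ forall z, le z x -> le z y -> le z m.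
Definition is_lub {P : poset} (x y j : P) :=
  le x j /\ le y j /\ forall z, le x z -> le y z -> le j z.

Definition lower_semilattice (P : poset) := forall x y : P, exists m, is_glb x y m.
Definition upper_semilattice (P : poset) := forall x y : P, exists j, is_lub x y j.
Definition lattice (P : poset) := lower_semilattice P /\ upper_semilattice P.

(* d is the join of d1, d2 in Id(P): the ideal generated by d1 ∪ d2 *)
Definition ideal_join {P : poset} (d1 d2 d : P -> Prop) :=
  is_ideal d /\ subset d1 d /\ subset d2 d /\
  forall e, is_ideal e -> subset d1 e -> subset d2 e -> subset d e.

Definition XDown_lower_subsemilattice_Down (X : poset -> Prop) (S : poset) :=
  (forall d, XDown X S d -> is_downset d) /\
  forall d1 d2, XDown X S d1 -> XDown X S d2 ->
    XDown X S (fun x => d1 x /\ d2 x).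

Definition XDown_upper_subsemilattice_Id (X : poset -> Prop) (S : poset) :=
  (forall d, XDown X S d -> is_ideal d) /\
  forall d1 d2, XDown X S d1 -> XDown X S d2 ->
    exists d, ideal_join d1 d2 d /\ XDown X S d.

(* X-Down(L) is a sublattice of Id(L) (meet in Id(L) is intersection) *)
Definition XDown_sublattice_Id (X : poset -> Prop) (L : poset) :=
  XDown_upper_subsemilattice_Id X L /\
  forall d1 d2, XDown X L d1 -> XDown X L d2 ->
    XDown X L (fun x => d1 x /\ d2 x).

(* For (i): a directed Q makes P ↓ f(Q) directed, and conversely Q itself is
   the X-downset Q ↓ id(Q) of Q.  For (ii): given X-downsets P ↓ f(Q) and
   P ↓ g(Q'), both their intersection (in a lower semilattice) and their
   ideal join (in an upper semilattice, for directed Q, Q') are of the form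
   P ↓ k(Q × Q') with k(q, q') = f q ∧ g q', resp. f q ∨ g q'; and precomposing
   k with a map R → Q × Q' of cofinal image does not change P ↓ k(-).
   The join formula needs Q, Q' nonempty; an empty Q gives the empty downset,
   whose join with the other one is that other one. *)
From Stdlib Require Import Classical ClassicalEpsilon.

Definition cofinal_products (X : poset -> Prop) :=
  forall Q Q', X Q -> X Q' ->
    exists R, X R /\ exists f : R -> prod_poset Q Q', isotone f /\ cofinal (image f).

Lemma isotone_comp {P Q R : poset} (f : P -> Q) (g : Q -> R) :
  isotone f -> isotone g -> isotone (fun x => g (f x)).
Proof. intros Hf Hg x y Hxy; apply Hg, Hf, Hxy. Qed.

Lemma prod_up_directed (Q Q' : poset) :
  up_directed Q -> up_directed Q' -> up_directed (prod_poset Q Q').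
Proof.
  intros HQ HQ' [a a'] [b b'].
  destruct (HQ a b) as [c [Hac Hbc]], (HQ' a' b') as [c' [Hac' Hbc']].
  exists (c, c'); split; split; assumption.
Qed.

Lemma glb_operation (S : poset) :
  lower_semilattice S -> exists mt : S -> S -> S, forall x y, is_glb x y (mt x y).
Proof.
  intros HS.
  destruct (choice (fun p m => is_glb (fst p) (snd p) m) (fun p => HS (fst p) (snd p)))
    as [m Hm].
  exists (fun x y => m (x, y)); intros x y; exact (Hm (x, y)).
Qed.

Lemma lub_operation (S : poset) :
  upper_semilattice S -> exists jn : S -> S -> S, forall x y, is_lub x y (jn x y).
Proof.
  intros HS.
  destruct (choice (fun p j => is_lub (fst p) (snd p) j) (fun p => HS (fst p) (snd p)))
    as [j Hj].
  exists (fun x y => j (x, y)); intros x y; exact (Hj (x, y)).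
Qed.

Lemma down_of_downset {P : poset} (Y : P -> Prop) : is_downset (down_of Y).
Proof.
  intros x y Hxy [z [Hz Hyz]]; exists z; split; [exact Hz | exact (le_trans _ _ _ _ Hxy Hyz)].
Qed.

Lemma down_of_image_in {Q P : poset} (f : Q -> P) (q : Q) : down_of (image f) (f q).
Proof. exists (f q); split; [exists q; reflexivity | apply le_refl]. Qed.

Lemma down_of_image_empty {Q P : poset} (f : Q -> P) (y : P) :
  ~ inhabited Q -> ~ down_of (image f) y.
Proof. intros HQ [_ [[q _] _]]; exact (HQ (inhabits q)). Qed.

Lemma down_of_image_ideal {Q P : poset} (f : Q -> P) :
  up_directed Q -> isotone f -> is_ideal (down_of (image f)).
Proof.
  intros HQ Hf; split; [apply down_of_downset |].
  intros x y [_ [[a <-] Hxa]] [_ [[b <-] Hyb]].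
  destruct (HQ a b) as [c [Hac Hbc]].
  exists (f c); split; [apply down_of_image_in |].
  split; eapply le_trans; eauto.
Qed.

Lemma down_of_image_comp_cofinal {R Z P : poset} (h : R -> Z) (k : Z -> P) :
  isotone k -> cofinal (image h) ->
  forall y, down_of (image (fun r => k (h r))) y <-> down_of (image k) y.
Proof.
  intros Hk Hh y; split.
  - intros [_ [[r <-] Hy]]; exists (k (h r)); split; [exists (h r); reflexivity | exact Hy].
  - intros [_ [[z <-] Hy]].
    destruct (Hh z) as [_ [[r <-] Hz]].
    exists (k (h r)); split; [exists r; reflexivity | exact (le_trans _ _ _ _ Hy (Hk _ _ Hz))].
Qed.

Section PairMeet.

Variables (S : poset) (mt : S -> S -> S).
Hypothesis mt_glb : forall x y, is_glb x y (mt x y).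

Lemma pair_meet_isotone {Q Q' : poset} (f : Q -> S) (g : Q' -> S) :
  isotone f -> isotone g ->
  isotone (fun p : prod_poset Q Q' => mt (f (fst p)) (g (snd p))).
Proof.
  intros Hf Hg [a a'] [b b'] [Hab Hab']; simpl in *.
  destruct (mt_glb (f a) (g a')) as [Hma [Hma' _]].
  destruct (mt_glb (f b) (g b')) as [_ [_ Hmb]].
  apply Hmb; [exact (le_trans _ _ _ _ Hma (Hf _ _ Hab))
             | exact (le_trans _ _ _ _ Hma' (Hg _ _ Hab'))].
Qed.

Lemma down_of_image_pair_meet {Q Q' : poset} (f : Q -> S) (g : Q' -> S) (y : S) :
  down_of (image (fun p : prod_poset Q Q' => mt (f (fst p)) (g (snd p)))) y <->
  down_of (image f) y /\ down_of (image g) y.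
Proof.
  split.
  - intros [_ [[[a a'] <-] Hy]]; simpl in Hy.
    destruct (mt_glb (f a) (g a')) as [Hm [Hm' _]].
    split; [exists (f a) | exists (g a')];
      (split; [eexists; reflexivity | eapply le_trans; eauto]).
  - intros [[_ [[a <-] Hya]] [_ [[a' <-] Hya']]].
    destruct (mt_glb (f a) (g a')) as [_ [_ Hm]].
    exists (mt (f a) (g a')); split; [exists (a, a'); reflexivity | exact (Hm y Hya Hya')].
Qed.

End PairMeet.

Section PairJoin.

Variables (S : poset) (jn : S -> S -> S).
Hypothesis jn_lub : forall x y, is_lub x y (jn x y).

Lemma pair_join_isotone {Q Q' : poset} (f : Q -> S) (g : Q' -> S) :
  isotone f -> isotone g ->
  isotone (fun p : prod_poset Q Q' => jn (f (fst p)) (g (snd p))).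
Proof.
  intros Hf Hg [a a'] [b b'] [Hab Hab']; simpl in *.
  destruct (jn_lub (f a) (g a')) as [_ [_ Hja]].
  destruct (jn_lub (f b) (g b')) as [Hjb [Hjb' _]].
  apply Hja; [exact (le_trans _ _ _ _ (Hf _ _ Hab) Hjb)
             | exact (le_trans _ _ _ _ (Hg _ _ Hab') Hjb')].
Qed.

Lemma down_of_image_pair_join {Q Q' : poset} (f : Q -> S) (g : Q' -> S) :
  up_directed Q -> up_directed Q' -> isotone f -> isotone g ->
  inhabited Q -> inhabited Q' ->
  ideal_join (down_of (image f)) (down_of (image g))
    (down_of (image (fun p : prod_poset Q Q' => jn (f (fst p)) (g (snd p))))).
Proof.
  intros HQ HQ' Hf Hg [q0] [q0'].
  split; [apply down_of_image_ideal;
          [apply prod_up_directed; assumption | apply pair_join_isotone; assumption] |].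
  split; [| split].
  - intros y [_ [[a <-] Hy]].
    exists (jn (f a) (g q0')); split; [exists (a, q0'); reflexivity |].
    destruct (jn_lub (f a) (g q0')) as [Hj _]; eapply le_trans; eauto.
  - intros y [_ [[a' <-] Hy]].
    exists (jn (f q0) (g a')); split; [exists (q0, a'); reflexivity |].
    destruct (jn_lub (f q0) (g a')) as [_ [Hj _]]; eapply le_trans; eauto.
  - intros e [He_down He_dir] Hfe Hge y [_ [[[a a'] <-] Hy]]; simpl in Hy.
    destruct (He_dir (f a) (g a') (Hfe _ (down_of_image_in f a))
                (Hge _ (down_of_image_in g a'))) as [w [Hw [Hfw Hgw]]].
    destruct (jn_lub (f a) (g a')) as [_ [_ Hj]].
    exact (He_down _ _ (le_trans _ _ _ _ Hy (Hj w Hfw Hgw)) Hw).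
Qed.

End PairJoin.

Lemma ideal_join_empty_l {P : poset} (d1 d2 : P -> Prop) :
  is_ideal d2 -> (forall y, ~ d1 y) -> ideal_join d1 d2 d2.
Proof.
  intros Hd2 Hd1; repeat split; try apply Hd2.
  - intros y Hy; destruct (Hd1 y Hy).
  - intros y Hy; exact Hy.
  - intros e _ _ He; exact He.
Qed.

Lemma ideal_join_comm {P : poset} (d1 d2 d : P -> Prop) :
  ideal_join d1 d2 d -> ideal_join d2 d1 d.
Proof.
  intros [Hd [H1 [H2 Hleast]]]; repeat split; try apply Hd; try assumption.
  intros e He He2 He1; exact (Hleast e He He1 He2).
Qed.

Lemma ideal_join_ext {P : poset} (d1 d1' d2 d2' d : P -> Prop) :
  (forall y, d1 y <-> d1' y) -> (forall y, d2 y <-> d2' y) ->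
  ideal_join d1' d2' d -> ideal_join d1 d2 d.
Proof.
  intros E1 E2 [Hd [H1 [H2 Hleast]]]; split; [exact Hd | split; [| split]].
  - intros y Hy; apply H1, E1, Hy.
  - intros y Hy; apply H2, E2, Hy.
  - intros e He He1 He2; apply Hleast; [exact He | intros y Hy; apply He1, E1, Hy
                                                  | intros y Hy; apply He2, E2, Hy].
Qed.

Section XDownClosure.

Variable X : poset -> Prop.

Lemma XDown_of {Q P : poset} (f : Q -> P) :
  X Q -> isotone f -> XDown X P (down_of (image f)).
Proof. intros HQ Hf; exists Q, f; repeat split; auto. Qed.

Lemma XDown_ext {P : poset} (d d' : P -> Prop) :
  (forall y, d' y <-> d y) -> XDown X P d' -> XDown X P d.
Proof.
  intros E [Q [f [HQ [Hf Hd']]]]; exists Q, f; repeat split; auto;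
    intros Hy; [apply Hd', E, Hy | apply E, Hd', Hy].
Qed.

Lemma XDown_full (Q : poset) : X Q -> XDown X Q (fun _ => True).
Proof.
  intros HQ; apply (XDown_ext _ (down_of (image (fun q : Q => q)))).
  - intros y; split; [auto | intros _; apply (down_of_image_in (fun q : Q => q))].
  - apply XDown_of; [exact HQ | intros x y Hxy; exact Hxy].
Qed.

Lemma XDown_downset {P : poset} (d : P -> Prop) : XDown X P d -> is_downset d.
Proof.
  intros [Q [f [_ [_ Hd]]]] x y Hxy Hy.
  apply Hd; apply Hd in Hy; exact (down_of_downset _ _ _ Hxy Hy).
Qed.

Lemma XDown_ideal :
  (forall Q, X Q -> up_directed Q) ->
  forall (P : poset) (d : P -> Prop), XDown X P d -> is_ideal d.
Proof.
  intros HX P d [Q [f [HQ [Hf Hd]]]].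
  destruct (down_of_image_ideal f (HX Q HQ) Hf) as [Hdown Hdir]; split.
  - intros x y Hxy Hy; apply Hd, (Hdown x y Hxy), Hd, Hy.
  - intros x y Hx Hy.
    destruct (Hdir x y (proj1 (Hd x) Hx) (proj1 (Hd y) Hy)) as [z [Hz Hxyz]].
    exists z; split; [apply Hd, Hz | exact Hxyz].
Qed.

Lemma XDown_ideal_up_directed :
  (forall (P : poset) (d : P -> Prop), XDown X P d -> is_ideal d) ->
  forall Q, X Q -> up_directed Q.
Proof.
  intros Hideal Q HQ x y.
  destruct (proj2 (Hideal Q _ (XDown_full Q HQ)) x y I I) as [z [_ Hz]].
  exists z; exact Hz.
Qed.

Hypothesis products : cofinal_products X.

Lemma XDown_lower_subsemilattice (S : poset) :
  lower_semilattice S -> XDown_lower_subsemilattice_Down X S.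
Proof.
  intros HS; split; [apply XDown_downset |].
  intros d1 d2 [Q [f [HQ [Hf Hd1]]]] [Q' [g [HQ' [Hg Hd2]]]].
  destruct (glb_operation S HS) as [mt Hmt].
  destruct (products Q Q' HQ HQ') as [R [HR [h [Hh Hcof]]]].
  set (k := fun p : prod_poset Q Q' => mt (f (fst p)) (g (snd p))).
  assert (Hk : isotone k) by (apply pair_meet_isotone; assumption).
  apply (XDown_ext _ (down_of (image (fun r => k (h r))))).
  - intros y; rewrite (down_of_image_comp_cofinal h k Hk Hcof y).
    rewrite Hd1, Hd2; exact (down_of_image_pair_meet S mt Hmt f g y).
  - apply XDown_of; [exact HR | apply isotone_comp; assumption].
Qed.

Hypothesis directed : forall Q, X Q -> up_directed Q.

Lemma XDown_upper_subsemilattice (S : poset) :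
  upper_semilattice S -> XDown_upper_subsemilattice_Id X S.
Proof.
  intros HS; split; [apply XDown_ideal, directed |].
  intros d1 d2 D1 D2.
  pose proof D1 as [Q [f [HQ [Hf Hd1]]]]; pose proof D2 as [Q' [g [HQ' [Hg Hd2]]]].
  destruct (classic (inhabited Q)) as [IQ | NQ];
    [destruct (classic (inhabited Q')) as [IQ' | NQ'] |].
  - destruct (lub_operation S HS) as [jn Hjn].
    destruct (products Q Q' HQ HQ') as [R [HR [h [Hh Hcof]]]].
    set (k := fun p : prod_poset Q Q' => jn (f (fst p)) (g (snd p))).
    assert (Hk : isotone k) by (apply pair_join_isotone; assumption).
    exists (down_of (image k)); split.
    + apply (ideal_join_ext _ _ _ _ _ Hd1 Hd2).
      exact (down_of_image_pair_join S jn Hjn f g (directed Q HQ) (directed Q' HQ')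
               Hf Hg IQ IQ').
    + apply (XDown_ext _ _ (down_of_image_comp_cofinal h k Hk Hcof)).
      apply XDown_of; [exact HR | apply isotone_comp; assumption].
  - exists d1; split; [| exact D1].
    apply ideal_join_comm, ideal_join_empty_l; [exact (XDown_ideal directed S d1 D1) |].
    intros y Hy; exact (down_of_image_empty g y NQ' (proj1 (Hd2 y) Hy)).
  - exists d2; split; [| exact D2].
    apply ideal_join_empty_l; [exact (XDown_ideal directed S d2 D2) |].
    intros y Hy; exact (down_of_image_empty f y NQ (proj1 (Hd1 y) Hy)).
Qed.

End XDownClosure.

Theorem lemma5p1 (X : poset -> Prop) :
  (* (i) *)
  ((forall (P : poset) (d : P -> Prop), XDown X P d -> is_ideal d) <->
   (forall Q, X Q -> up_directed Q)) /\
  (* (ii) *)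
  (let iia := forall Q Q', X Q -> X Q' ->
        exists R, X R /\ exists f : R -> prod_poset Q Q',
          isotone f /\ cofinal (image f) in
   (iia -> forall S, lower_semilattice S -> XDown_lower_subsemilattice_Down X S) /\
   ((forall Q, X Q -> up_directed Q) -> iia ->
      (forall S, upper_semilattice S -> XDown_upper_subsemilattice_Id X S) /\
      (forall L, lattice L -> XDown_sublattice_Id X L))).
Proof.
  split.
  - split; [apply XDown_ideal_up_directed | apply XDown_ideal].
  - intros iia; split.
    + intros products; exact (XDown_lower_subsemilattice X products).
    + intros directed products; split.
      * exact (XDown_upper_subsemilattice X products directed).
      * intros L [Hlower Hupper]; split.
        -- exact (XDown_upper_subsemilattice X products directed L Hupper).
        -- exact (proj2 (XDown_lower_subsemilattice X products L Hlower)).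
Qed.
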